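(* Let $p$ be a prime. (1) For every $X\in\mathcal{X}_p$ there exist $n\in\mathbb{N}$ and a cyclic subgroup $H$ of the multiplicative group $\mathbb{Z}_{p^n}^\times$ such that $X=\pi_n^{-1}(H)$. (2) For every $n\in\mathbb{N}$ and every cyclic subgroup $H$ of $\mathbb{Z}_{p^n}^\times$ of order $|H|\ge\max\{p,3\}$ there exists $a\in\mathbb{N}\setminus p\mathbb{N}$ such that $\pi_n^{-1}(H)=\overline{a^{\mathbb{N}}}\in\mathcal{X}_p$.
   Context: $\mathbb{N}=\{1,2,\dots\}$, $\mathbb{N}_0=\{0\}\cup\mathbb{N}$, $x^{\mathbb{N}}=\{x^k:k\in\mathbb{N}\}$. $\mathbb{Z}_{p^n}=\mathbb{Z}/p^n\mathbb{Z}$ with unit group $\mathbb{Z}_{p^n}^\times$, and $\pi_n:\mathbb{N}\to\mathbb{Z}_{p^n}$, $x\mapsto x+p^n\mathbb{Z}$. The $p$-adic topology on $\mathbb{N}\setminus p\mathbb{N}$ is generated by the sets $x+p^m\mathbb{N}_0$ ($x,m\in\mathbb{N}$). $\mathcal{X}_p=\{\overline{a^{\mathbb{N}}}:a\in\mathbb{N}\setminus p\mathbb{N},\ a\ne1\}$, closures taken in the $p$-adic topology on $\mathbb{N}\setminus p\mathbb{N}$. *)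

From mathcomp Require Import all_boot all_order all_algebra all_fingroup all_solvable.
Set Implicit Arguments. Unset Strict Implicit. Unset Printing Implicit Defensive.

(* Subsets of nat are predicates nat -> Prop; N = {1,2,...} is {x | 0 < x}. *)

Definition pow_set (a : nat) : nat -> Prop :=
  fun y => exists k, 0 < k /\ y = a ^ k.

(* Basic open set x + p^m N_0 of the p-adic topology (x, m in N). *)
Definition padic_ball (p x m : nat) : nat -> Prop :=
  fun y => x <= y /\ y = x %[mod p ^ m].

Definition padic_closure (p : nat) (S : nat -> Prop) : nat -> Prop :=
  fun y => [/\ 0 < y, ~~ (p %| y) &
    forall x m, 0 < x -> 0 < m -> padic_ball p x m y ->
      exists s, S s /\ padic_ball p x m s].

Definition in_Xp (p : nat) (X : nat -> Prop) : Prop :=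
  exists a, [/\ 0 < a, ~~ (p %| a), a != 1 &
    forall y, X y <-> padic_closure p (pow_set a) y].

Definition pi_preim (p n : nat) (H : {set {unit 'Z_(p ^ n)}}) : nat -> Prop :=
  fun x => 0 < x /\ exists u : {unit 'Z_(p ^ n)}, u \in H /\ val u = (x%:R : 'Z_(p ^ n))%R.
Arguments pi_preim : clear implicits.

From mathcomp Require Import all_boot all_order all_algebra all_fingroup all_solvable.
From mathcomp Require Import ring zify.
Set Implicit Arguments. Unset Strict Implicit. Unset Printing Implicit Defensive.
Import GRing.Theory.

(* For a > 1 prime to p, write a^e = 1 + c p^n with p not dividing c (and n >= 2
   if p = 2).  Lifting the exponent shows that (1 + c p^n)^(p^i) = 1 + c_i p^(n+i)
   with p not dividing c_i, so modulo each p^(n+i) the powers of a^e are exactly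
   the residues congruent to 1 mod p^n.  Hence y is in the p-adic closure of a^N
   iff y is a power of a mod p^n, i.e. the closure is the preimage of the cyclic
   group generated by a in (Z/p^n)^x; e = phi(p^2) gives such an n for every a.
   Conversely, if h generates H and d = #[h] >= max(p,3), then p | d (4 | d if
   p = 2) because d divides p^(n-1)(p-1).  For a lift a of h, g = a^(d/p) is
   1 mod p (mod 4 if p = 2) but not 1 mod p^n, while g^p = 1 mod p^n; lifting
   the exponent then gives a^d = g^p = 1 + c p^n with p not dividing c. *)

Lemma prime_expn_gt1 p n : prime p -> 0 < n -> 1 < p ^ n.
Proof. by move=> p_pr n_gt0; rewrite -[1](expn0 p) ltn_exp2l ?prime_gt1. Qed.

Lemma eq_mod_dvd d m x y : d %| m -> x = y %[mod m] -> x = y %[mod d].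
Proof. by move=> dvd_dm Exy; rewrite -(modn_dvdm x dvd_dm) Exy modn_dvdm. Qed.

Lemma eq_modM d x1 x2 y1 y2 :
  x1 = x2 %[mod d] -> y1 = y2 %[mod d] -> x1 * y1 = x2 * y2 %[mod d].
Proof. by move=> Ex Ey; rewrite -modnMm Ex Ey modnMm. Qed.

Lemma eq1_modE m x : 1 < m -> x = 1 %[mod m] -> x = 1 + x %/ m * m.
Proof. by move=> m_gt1 Ex; rewrite {1}(divn_eq x m) Ex modn_small // addnC. Qed.

Lemma expn_totient_mod a m k t :
  coprime a m -> a ^ (k + totient m * t) = a ^ k %[mod m].
Proof.
move=> co_am; rewrite expnD expnM -modnMmr -modnXm Euler_exp_totient //.
by rewrite modnXm exp1n modnMmr muln1.
Qed.

Lemma expn_inverse_mod a m k : 0 < m -> coprime a m ->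
  a ^ k * a ^ (k * (totient m).-1) = 1 %[mod m].
Proof.
move=> m_gt0 co_am; rewrite -expnD -mulnS prednK ?totient_gt0 //.
by rewrite mulnC -[_ * k]add0n expn_totient_mod // expn0.
Qed.

Lemma linear_congr_solvable c m d : 0 < m -> coprime c m ->
  exists s, m %| d + s * c.
Proof.
move=> m_gt0 co_cm; exists (d * m.-1 * c ^ (totient m).-1).
rewrite -mulnA -expnSr prednK ?totient_gt0 // /dvdn -modnDmr -modnMmr.
by rewrite Euler_exp_totient // modnMmr muln1 modnDmr -mulnS prednK // modnMl.
Qed.

Definition pow_mod (a m y : nat) : Prop := exists k, y = a ^ k %[mod m].

Lemma pow_mod_dvd a d m y : d %| m -> pow_mod a m y -> pow_mod a d y.
Proof. by move=> dvd_dm [k Ek]; exists k; apply: eq_mod_dvd Ek. Qed.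

Lemma pow_mod_inverse a m y : 0 < m -> coprime a m -> pow_mod a m y ->
  exists j, y * a ^ j = 1 %[mod m].
Proof.
move=> m_gt0 co_am [k Ek]; exists (k * (totient m).-1).
by rewrite (eq_modM Ek (erefl _)) expn_inverse_mod.
Qed.

Lemma pow_mod_of_inverse a m y j : 0 < m -> coprime a m ->
  y * a ^ j = 1 %[mod m] -> pow_mod a m y.
Proof.
move=> m_gt0 co_am Eyj; exists (j * (totient m).-1).
rewrite -[y]muln1 -(eq_modM (erefl (y %% m)) (expn_inverse_mod j m_gt0 co_am)).
by rewrite mulnA (eq_modM Eyj (erefl _)) mul1n.
Qed.

Lemma exp1Dn_trunc3 x s :
  exists r, (1 + x) ^ s = 1 + s * x + 'C(s, 2) * x ^ 2 + r * x ^ 3.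
Proof.
elim: s => [|s [r IHs]]; first by exists 0; rewrite expn0 bin0n.
by exists (r + 'C(s, 2) + r * x); rewrite expnS IHs binS bin1; ring.
Qed.

Lemma exp1Dn_congr_sq d e q s :
  (1 + d * q) * (1 + e * q) ^ s = 1 + (d + s * e) * q %[mod q ^ 2].
Proof.
have [r ->] := exp1Dn_trunc3 (e * q) s.
have -> : (1 + d * q) * (1 + s * (e * q) + 'C(s, 2) * (e * q) ^ 2 + r * (e * q) ^ 3)
  = (d * s * e + (1 + d * q) * ('C(s, 2) * e ^ 2 + r * e ^ 3 * q)) * q ^ 2
    + (1 + (d + s * e) * q) by ring.
by rewrite modnMDl.
Qed.

(* [(p == 2) < j] means j >= 1, and j >= 2 when p = 2. *)
Lemma lifting_exponent p j c : prime p -> (p == 2) < j -> ~~ (p %| c) ->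
  exists2 c', ~~ (p %| c') & (1 + c * p ^ j) ^ p = 1 + c' * p ^ j.+1.
Proof.
move=> p_pr lt_j not_dvd_pc; have p_gt1 := prime_gt1 p_pr.
have j_gt0 : 0 < j := leq_ltn_trans (leq0n _) lt_j.
have dvd_sq : p ^ j.+2 %| 'C(p, 2) * p ^ (j * 2).
  case: (eqVneq p 2) lt_j => [p2 | p_neq2] lt_j.
    by rewrite p2 binn mul1n dvdn_exp2l //; lia.
  have p_gt2 : 0 < 2 < p by rewrite /= ltn_neqAle eq_sym p_neq2 p_gt1.
  have [m ->] := dvdnP (prime_dvd_bin p_pr p_gt2).
  by rewrite -mulnA -expnS dvdn_mull // dvdn_exp2l //; lia.
have dvd_cube : p ^ j.+2 %| p ^ (j * 3) by rewrite dvdn_exp2l //; lia.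
have [r Er] := exp1Dn_trunc3 (c * p ^ j) p.
have [k Ek] : exists k,
    'C(p, 2) * (c * p ^ j) ^ 2 + r * (c * p ^ j) ^ 3 = k * p ^ j.+2.
  apply/dvdnP; rewrite !expnMn -!expnM dvdn_add //.
    by rewrite mulnCA dvdn_mull.
  by rewrite !dvdn_mull.
exists (c + p * k); first by rewrite dvdn_addl ?dvdn_mulr.
by rewrite Er -addnA Ek !expnS; ring.
Qed.

Lemma lifting_exponentX p n c i : prime p -> (p == 2) < n -> ~~ (p %| c) ->
  exists2 c', ~~ (p %| c') & (1 + c * p ^ n) ^ (p ^ i) = 1 + c' * p ^ (n + i).
Proof.
move=> p_pr lt_n not_dvd_pc.
elim: i => [|i [ci not_dvd_pci Eci]]; first by exists c; rewrite ?addn0 ?expn1.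
have lt_ni : (p == 2) < n + i := leq_trans lt_n (leq_addr i n).
have [c' not_dvd_pc' Ec'] := lifting_exponent p_pr lt_ni not_dvd_pci.
by exists c'; rewrite // expnSr expnM Eci Ec' addnS.
Qed.

Lemma congr1_power_inverse p n c i z : prime p -> (p == 2) < n -> ~~ (p %| c) ->
  z = 1 %[mod p ^ n] -> exists t, z * (1 + c * p ^ n) ^ t = 1 %[mod p ^ (n + i)].
Proof.
move=> p_pr lt_n not_dvd_pc Ez.
have n_gt0 : 0 < n := leq_ltn_trans (leq0n _) lt_n.
elim: i => [|i [t Et]]; first by exists 0; rewrite addn0 muln1.
set q := p ^ (n + i) in Et *.
have p_dvd_q : p %| q by rewrite dvdn_exp ?addn_gt0 ?n_gt0.
have q_gt1 : 1 < q by rewrite prime_expn_gt1 ?addn_gt0 ?n_gt0.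
have Ew := eq1_modE q_gt1 Et; move: (_ %/ q) Ew => d Ew.
have [ci not_dvd_pci Eci] := lifting_exponentX i p_pr lt_n not_dvd_pc.
(* The p-adic digit d is cancelled by a power of (1 + c p^n)^(p^i) = 1 + ci q. *)
have [s dvd_ps] : exists s, p %| d + s * ci.
  by apply: linear_congr_solvable; rewrite ?prime_gt0 // coprime_sym prime_coprime.
exists (t + p ^ i * s).
have pq_dvd_sq : p * q %| q ^ 2 by rewrite (expnS q 1) expn1 dvdn_mul.
rewrite addnS expnS -/q expnD expnM Eci mulnA Ew.
rewrite (eq_mod_dvd pq_dvd_sq (exp1Dn_congr_sq _ _ _ _)).
by have [k ->] := dvdnP (dvdn_mul dvd_ps (dvdnn q)); rewrite addnC modnMDl.
Qed.

Lemma pow_mod_lift p n a e c m y : prime p -> (p == 2) < n -> ~~ (p %| c) ->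
  coprime a p -> a ^ e = 1 + c * p ^ n ->
  pow_mod a (p ^ n) y -> pow_mod a (p ^ (n + m)) y.
Proof.
move=> p_pr lt_n not_dvd_pc co_ap Ea pow_y.
have pk_gt0 k : 0 < p ^ k by rewrite expn_gt0 prime_gt0.
have [j Ej] := pow_mod_inverse (pk_gt0 n) (coprimeXr n co_ap) pow_y.
have [t Et] := congr1_power_inverse m p_pr lt_n not_dvd_pc Ej.
apply: (@pow_mod_of_inverse _ _ _ (j + e * t)); rewrite ?coprimeXr //.
by rewrite expnD expnM Ea mulnA.
Qed.

Lemma padic_closure_powP p a y : prime p -> 1 < a -> coprime a p ->
  padic_closure p (pow_set a) y <->
  [/\ 0 < y, ~~ (p %| y) & forall m, 0 < m -> pow_mod a (p ^ m) y].
Proof.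
move=> p_pr a_gt1 co_ap.
split=> [[y_gt0 not_dvd_py near_y] | [y_gt0 not_dvd_py pow_y]].
  split=> // m m_gt0.
  have [_ [[k [_ ->]] [_ Ek]]] := near_y y m y_gt0 m_gt0 (conj (leqnn y) erefl).
  by exists k.
split=> // x m x_gt0 m_gt0 [le_xy Exy].
have [k Ek] := pow_y m m_gt0.
pose K := k + totient (p ^ m) * x.
have phi_gt0 : 0 < totient (p ^ m) by rewrite totient_gt0 expn_gt0 prime_gt0.
exists (a ^ K); split.
  by exists K; split; rewrite // addn_gt0 muln_gt0 phi_gt0 x_gt0 orbT.
split.
  apply: leq_trans (ltnW (ltn_expl K a_gt1)).
  exact: leq_trans (leq_pmull x phi_gt0) (leq_addl k _).
by rewrite -Exy Ek expn_totient_mod // coprimeXr.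
Qed.

Lemma padic_closure_pow_modE p n a e c y :
  prime p -> (p == 2) < n -> ~~ (p %| c) -> 1 < a -> coprime a p ->
  a ^ e = 1 + c * p ^ n ->
  padic_closure p (pow_set a) y <-> 0 < y /\ pow_mod a (p ^ n) y.
Proof.
move=> p_pr lt_n not_dvd_pc a_gt1 co_ap Ea.
have n_gt0 : 0 < n := leq_ltn_trans (leq0n _) lt_n.
rewrite padic_closure_powP //; split=> [[y_gt0 _ pow_y] | [y_gt0 pow_y]].
  by split; last exact: pow_y.
split=> // [|m _].
  have [k Ek] := pow_mod_dvd (dvdn_exp n_gt0 (dvdnn p)) pow_y.
  by rewrite /dvdn Ek -/(dvdn _ _) -prime_coprime // coprime_sym coprimeXl.
apply: pow_mod_dvd (dvdn_exp2l p (leq_addl n m)) _.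
exact: pow_mod_lift p_pr lt_n not_dvd_pc co_ap Ea pow_y.
Qed.

Lemma exists_exact_power p a : prime p -> 1 < a -> coprime a p ->
  exists e n c, [/\ 1 < n, ~~ (p %| c) & a ^ e = 1 + c * p ^ n].
Proof.
move=> p_pr a_gt1 co_ap.
have [e e_gt0 Ee] : exists2 e, 0 < e & a ^ e = 1 %[mod p ^ 2].
  exists (totient (p ^ 2)); first by rewrite totient_gt0 expn_gt0 prime_gt0.
  by rewrite Euler_exp_totient ?coprimeXr.
have ae_gt1 : 1 < a ^ e := leq_ltn_trans e_gt0 (ltn_expl e a_gt1).
have ae1_gt0 : 0 < a ^ e - 1 by rewrite subn_gt0.
have [c co_pc Ec] := pfactor_coprime p_pr ae1_gt0.
exists e, (logn p (a ^ e - 1)), c; split.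
- by rewrite -(pfactor_dvdn _ p_pr ae1_gt0) -eqn_mod_dvd ?(ltnW ae_gt1) ?Ee.
- by rewrite -prime_coprime.
- by rewrite -Ec subnKC ?(ltnW ae_gt1).
Qed.

Lemma pfactor_dvdn_totient_divisor p n d : prime p -> d %| totient (p ^ n) ->
  maxn p 3 <= d -> p ^ (p == 2).+1 %| d.
Proof.
move=> p_pr; have p_gt1 := prime_gt1 p_pr.
case: n => [|n].
  by rewrite expn0 [totient 1]/= dvdn1 => /eqP ->; rewrite geq_max andbF.
rewrite totient_pfactor //= => dvd_d le_d.
case: (eqVneq p 2) => [p2 | p_neq2].
  move: dvd_d le_d; rewrite p2 mul1n => /dvdn_pfactor[//|[|[|k]] _ ->] //.
  by rewrite dvdn_exp2l.
rewrite /= expn1; apply: contraLR le_d.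
rewrite -prime_coprime // coprime_sym -ltnNge => co_dp.
have le_dp : d <= p.-1.
  apply: dvdn_leq; first by rewrite ltn_predRL.
  by rewrite -(Gauss_dvdl _ (coprimeXr n co_dp)).
by rewrite (leq_trans _ (leq_maxl p 3)) // (leq_ltn_trans le_dp) // ltn_predL ltnW.
Qed.

Lemma expn_divp_congr1 p a d : prime p -> coprime a p -> p ^ (p == 2).+1 %| d ->
  a ^ d = 1 %[mod p] -> a ^ (d %/ p) = 1 %[mod p ^ (p == 2).+1].
Proof.
move=> p_pr co_ap /dvdnP[k ->] Ead.
case: (eqVneq p 2) Ead => [p2 | _] /= Ead; last first.
  rewrite expn1 mulnK ?prime_gt0 // -(expn_totient_mod k k co_ap).
  by rewrite totient_prime // -mulSn prednK ?prime_gt0 // mulnC -(expn1 p).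
rewrite p2 in co_ap *.
have -> : k * 2 ^ 2 %/ 2 = 0 + totient (2 ^ 2) * k.
  by rewrite totient_pfactor // (expnS 2 1) mulnA mulnK // mulnC.
by rewrite expn_totient_mod ?coprimeXr.
Qed.

Lemma pth_power_exact p n g : prime p ->
  g = 1 %[mod p ^ (p == 2).+1] -> g != 1 %[mod p ^ n] -> g ^ p = 1 %[mod p ^ n] ->
  (p == 2) < n /\ exists2 c, ~~ (p %| c) & g ^ p = 1 + c * p ^ n.
Proof.
move=> p_pr Eg1 ng1 Egp.
have g_gt1 : 1 < g.
  case: g Eg1 ng1 {Egp} => [|[|g]] //; last by rewrite eqxx.
  by rewrite mod0n modn_small // prime_expn_gt1.
have g1_gt0 : 0 < g - 1 by rewrite subn_gt0.
have [c0 co_pc0 Eg] := pfactor_coprime p_pr g1_gt0.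
have le_j : (p == 2) < logn p (g - 1).
  by rewrite -(pfactor_dvdn _ p_pr g1_gt0) -eqn_mod_dvd ?(ltnW g_gt1) ?Eg1.
have lt_jn : logn p (g - 1) < n.
  by rewrite ltnNge -(pfactor_dvdn _ p_pr g1_gt0) -eqn_mod_dvd ?(ltnW g_gt1).
move: (logn p (g - 1)) le_j lt_jn Eg => j le_j lt_jn Eg.
have {}Eg : g = 1 + c0 * p ^ j by rewrite -Eg subnKC ?(ltnW g_gt1).
have not_dvd_pc0 : ~~ (p %| c0) by rewrite -prime_coprime.
have [c not_dvd_pc Ec] := lifting_exponent p_pr le_j not_dvd_pc0.
rewrite Eg Ec in Egp *.
suff -> : n = j.+1 by split; [exact: ltnW | exists c].
apply/eqP; rewrite eqn_leq lt_jn andbT leqNgt; apply/negP => lt_jn1.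
have : p ^ j.+2 %| c * p ^ j.+1.
  apply: dvdn_trans (dvdn_exp2l p lt_jn1) _.
  by rewrite -(addKn 1 (c * _)) -eqn_mod_dvd ?leq_addr // Egp.
by rewrite expnS dvdn_pmul2r ?expn_gt0 ?prime_gt0 // (negbTE not_dvd_pc).
Qed.

Lemma eqZp_nat m x y : 1 < m -> ((x%:R : 'Z_m) == y%:R)%R = (x == y %[mod m]).
Proof. by move=> m_gt1; rewrite -val_eqE /= !val_Zp_nat. Qed.

Lemma coprime_unit_Zp m (u : {unit 'Z_m}) a : 1 < m -> val u = a%:R%R -> coprime a m.
Proof. by move=> m_gt1 Eu; rewrite coprime_sym -unitZpE // -Eu (valP u). Qed.

Lemma unit_Zp_expg_eq1 m (u : {unit 'Z_m}) a k : 1 < m -> val u = a%:R%R ->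
  (u ^+ k == 1)%g = (a ^ k == 1 %[mod m]).
Proof.
move=> m_gt1 Eu; rewrite -eqZp_nat // -val_eqE /=.
by rewrite FinRing.val_unitX Eu natrX mulr1n.
Qed.

Lemma pi_preim_cycleE p n (h : {unit 'Z_(p ^ n)}) a y : 1 < p ^ n -> val h = a%:R%R ->
  pi_preim p n <[h]>%g y <-> 0 < y /\ pow_mod a (p ^ n) y.
Proof.
move=> pn_gt1 Eh; split=> [[y_gt0 [_ [/cycleP[k ->] Ek]]] | [y_gt0 [k Ek]]].
  split=> //; exists k; apply/eqP.
  by rewrite -eqZp_nat // -Ek FinRing.val_unitX Eh natrX.
split=> //; exists (h ^+ k)%g; split; first exact: mem_cycle.
by apply/eqP; rewrite FinRing.val_unitX Eh -natrX eqZp_nat // eq_sym; apply/eqP.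
Qed.

Lemma pi_preim_cycle_closureE p n a e c (h : {unit 'Z_(p ^ n)}) y :
  prime p -> (p == 2) < n -> ~~ (p %| c) -> 1 < a -> coprime a p ->
  a ^ e = 1 + c * p ^ n -> val h = a%:R%R ->
  pi_preim p n <[h]>%g y <-> padic_closure p (pow_set a) y.
Proof.
move=> p_pr lt_n not_dvd_pc a_gt1 co_ap Ea Eh.
have pn_gt1 : 1 < p ^ n by rewrite prime_expn_gt1 // (leq_ltn_trans (leq0n _) lt_n).
apply: iff_trans (pi_preim_cycleE y pn_gt1 Eh) _.
exact: iff_sym (padic_closure_pow_modE y p_pr lt_n not_dvd_pc a_gt1 co_ap Ea).
Qed.

Lemma exact_power_base_gt1 p n a e c : prime p -> ~~ (p %| c) ->
  a ^ e = 1 + c * p ^ n -> 1 < a.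
Proof.
move=> p_pr not_dvd_pc Ea.
have c_gt0 : 0 < c by rewrite lt0n; apply: contraNneq not_dvd_pc => ->.
have : 1 < a ^ e by rewrite Ea add1n ltnS muln_gt0 c_gt0 expn_gt0 prime_gt0.
by case: a {Ea} => [|[|a]] //; [case: e => // e; rewrite exp0n | rewrite exp1n].
Qed.

Lemma order_unit_Zp_exact_power p n (h : {unit 'Z_(p ^ n)}) a :
  prime p -> 0 < n -> val h = a%:R%R -> maxn p 3 <= #[h]%g ->
  (p == 2) < n /\ exists2 c, ~~ (p %| c) & a ^ #[h]%g = 1 + c * p ^ n.
Proof.
move=> p_pr n_gt0 Eh le_h; have pn_gt1 := prime_expn_gt1 p_pr n_gt0.
set d := #[h]%g in le_h *.
have co_ap : coprime a p.
  by rewrite -(coprime_pexpr _ _ n_gt0) (coprime_unit_Zp pn_gt1 Eh).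
have dvd_d : p ^ (p == 2).+1 %| d.
  apply: pfactor_dvdn_totient_divisor le_h => //.
  by rewrite -card_units_Zp ?expn_gt0 ?prime_gt0 //; exact: order_dvdG (in_setT h).
have Ead : a ^ d = 1 %[mod p ^ n].
  by apply/eqP; rewrite -(unit_Zp_expg_eq1 _ pn_gt1 Eh) expg_order.
have p_dvd_d : p %| d := dvdn_trans (dvdn_exp (ltn0Sn _) (dvdnn p)) dvd_d.
have nEadp : a ^ (d %/ p) != 1 %[mod p ^ n].
  have dp_gt0 : 0 < d %/ p by rewrite divn_gt0 ?prime_gt0 // dvdn_leq ?order_gt0.
  rewrite -(unit_Zp_expg_eq1 _ pn_gt1 Eh) -order_dvdn -/d; apply/negP.
  by move/(dvdn_leq dp_gt0); rewrite leqNgt ltn_Pdiv ?prime_gt1 ?order_gt0.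
have Eadp := eq_mod_dvd (dvdn_exp n_gt0 (dvdnn p)) Ead.
have := pth_power_exact p_pr (expn_divp_congr1 p_pr co_ap dvd_d Eadp) nEadp.
by rewrite -expnM divnK // => /(_ Ead).
Qed.

Theorem lemma4p2 (p : nat) (hp : prime p) :
  (forall X : nat -> Prop, in_Xp p X ->
     exists n : nat, exists H : {group {unit 'Z_(p ^ n)}},
       0 < n /\ cyclic H /\ (forall x, X x <-> pi_preim p n H x))
  /\
  (forall (n : nat) (H : {group {unit 'Z_(p ^ n)}}), 0 < n -> cyclic H ->
     maxn p 3 <= #|H| ->
     exists a : nat, [/\ 0 < a, ~~ (p %| a),
       (forall x, pi_preim p n H x <-> padic_closure p (pow_set a) x) &
       in_Xp p (padic_closure p (pow_set a))]).
Proof.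
split=> [X [a [a_gt0 not_dvd_pa a_neq1 defX]] | n H n_gt0 /cyclicP[h defH] le_H].
  have a_gt1 : 1 < a by rewrite ltn_neqAle eq_sym a_neq1.
  have co_ap : coprime a p by rewrite coprime_sym prime_coprime.
  have [e [n [c [n_gt1 not_dvd_pc Ea]]]] := exists_exact_power hp a_gt1 co_ap.
  have n_gt0 := ltnW n_gt1.
  have a_unit : (a%:R : 'Z_(p ^ n))%R \is a GRing.unit.
    by rewrite unitZpE ?prime_expn_gt1 // coprime_pexpl // coprime_sym.
  exists n, <[FinRing.Unit a_unit]>%G; split=> //; split; first exact: cycle_cyclic.
  have lt_n : (p == 2) < n := leq_ltn_trans (leq_b1 _) n_gt1.
  move=> y; apply: iff_trans (defX y) (iff_sym _).
  exact: pi_preim_cycle_closureE hp lt_n not_dvd_pc a_gt1 co_ap Ea _.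
have le_h : maxn p 3 <= #[h]%g by rewrite /order -defH.
pose a := nat_of_ord (val h : 'Z_(p ^ n)); have Eh : val h = a%:R%R by rewrite natr_Zp.
have [lt_n [c not_dvd_pc Ea]] := order_unit_Zp_exact_power hp n_gt0 Eh le_h.
have co_ap : coprime a p.
  by rewrite -(coprime_pexpr _ _ n_gt0) (coprime_unit_Zp (prime_expn_gt1 hp n_gt0) Eh).
have a_gt1 : 1 < a := exact_power_base_gt1 hp not_dvd_pc Ea.
have not_dvd_pa : ~~ (p %| a) by rewrite -prime_coprime // coprime_sym.
exists a; split=> //; first exact: ltnW.
  move=> y; rewrite defH.
  exact: pi_preim_cycle_closureE hp lt_n not_dvd_pc a_gt1 co_ap Ea Eh.
exists a; split=> //; [exact: ltnW | by rewrite neq_ltn a_gt1 orbT].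
Qed.
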